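(* Let $T=([d],E)$ be a rooted tree, let $\{r_e\}_{e\in E}$ be positive integers, and let $p:\prod_{k=1}^d[n_k]\to\mathbb{R}$. Suppose that for every edge $w\to k$ of $T$ (i.e. $k=\mathcal{P}(w)$) there are $\Phi_{w\to k}:\prod_{i\in\mathcal{L}(w)\cup\{w\}}[n_i]\times[r_{(w,k)}]\to\mathbb{R}$ and $\Psi_{w\to k}:[r_{(w,k)}]\times\prod_{i\in\mathcal{R}(w)}[n_i]\to\mathbb{R}$ with $$p(x_1,\dots,x_d)=\sum_{\alpha_{(w,k)}=1}^{r_{(w,k)}}\Phi_{w\to k}(x_{\mathcal{L}(w)\cup w},\alpha_{(w,k)})\,\Psi_{w\to k}(\alpha_{(w,k)},x_{\mathcal{R}(w)}),$$ where the unfolding matrix $p(x_{\mathcal{L}(w)\cup w};x_{\mathcal{R}(w)})$ has rank exactly $r_{(w,k)}$ (so that the unfoldings $\Phi_{w\to k}(x_{\mathcal{L}(w)\cup w};\alpha_{(w,k)})$ and $\Psi_{w\to k}(\alpha_{(w,k)};x_{\mathcal{R}(w)})$ have full column rank, resp. full row rank, $r_{(w,k)}$). For a non-leaf $k$ define $$\Phi_{\mathcal{C}(k)\to k}(x_{\mathcal{L}(k)},\alpha_{(k,\mathcal{C}(k))})=\prod_{w\in\mathcal{C}(k)}\Phi_{w\to k}(x_{\mathcal{L}(w)\cup w},\alpha_{(k,w)}).$$ Consider, for $k=1,\dots,d$, the following linear equations (Core Determining Equations) in the unknown $G_k:[n_k]\times\prod_{w\in\mathcal{N}(k)}[r_{(w,k)}]\to\mathbb{R}$: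 - if $k$ is a leaf: $G_k(x_k,\alpha_{(k,\mathcal{P}(k))})=\Phi_{k\to\mathcal{P}(k)}(x_k,\alpha_{(k,\mathcal{P}(k))})$; - if $k$ is the root: $\sum_{\alpha_{(k,\mathcal{C}(k))}}\Phi_{\mathcal{C}(k)\to k}(x_{\mathcal{L}(k)},\alpha_{(k,\mathcal{C}(k))})\,G_k(x_k,\alpha_{(k,\mathcal{N}(k))})=p(x_1,\dots,x_d)$ for all $x$; - otherwise: $\sum_{\alpha_{(k,\mathcal{C}(k))}}\Phi_{\mathcal{C}(k)\to k}(x_{\mathcal{L}(k)},\alpha_{(k,\mathcal{C}(k))})\,G_k(x_k,\alpha_{(k,\mathcal{N}(k))})=\Phi_{k\to\mathcal{P}(k)}(x_{\mathcal{L}(k)\cup k},\alpha_{(k,\mathcal{P}(k))})$ for all $x_{\mathcal{L}(k)\cup k},\alpha_{(k,\mathcal{P}(k))}$. Then each of these equations has a unique solution $G_k$ (it is solvable exactly, and the solution is unique), and $p$ admits a TTNS ansatz over the cores $\{G_k\}_{k=1}^d$, i.e. $$p(x_1,\dots,x_d)=\sum_{\alpha_e\in[r_e],\,e\in E}\ \prod_{k=1}^d G_k\big(x_k,\alpha_{(k,\mathcal{N}(k))}\big).$$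
   Context: $T=([d],E)$ is a tree on vertex set $[d]=\{1,\dots,d\}$ with a distinguished root. For a node $k$: $\mathcal{C}(k)$ is its set of children, $\mathcal{P}(k)$ its parent (empty for the root), $\mathcal{N}(k)=\mathcal{C}(k)\cup\mathcal{P}(k)$ its neighbors, $\mathcal{L}(k)$ the set of proper descendants of $k$, and $\mathcal{R}(k)=[d]\setminus(\mathcal{L}(k)\cup\{k\})$ the set of non-descendants. Edges are undirected; $(w,k)$ and $(k,w)$ denote the same edge, and $w\to k$ indicates that $k$ is the parent of $w$. Each variable $x_i$ ranges over $[n_i]$. For $\mathcal{S}=\{i_1,\dots,i_m\}\subset[d]$, $x_{\mathcal{S}}=(x_{i_1},\dots,x_{i_m})$, and $x_{\mathcal{S}\cup k}:=x_{\mathcal{S}\cup\{k\}}$; each edge $e$ carries an index $\alpha_e\in[r_e]$, and $\alpha_{(k,\mathcal{S})}=(\alpha_{(k,i)})_{i\in\mathcal{S}}$ for a set $\mathcal{S}$ of neighbors of $k$. For a tensor $f$ and a partition $\mathcal{U}\cup\mathcal{V}$ of its index set, $f(x_{\mathcal{U}};x_{\mathcal{V}})$ denotes the unfolding matrix with rows indexed by $x_{\mathcal{U}}$ and columns by $x_{\mathcal{V}}$. *)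

From HB Require Import structures.
From mathcomp Require Import all_boot all_order all_algebra.
Set Implicit Arguments. Unset Strict Implicit. Unset Printing Implicit Defensive.
Import Order.TTheory GRing.Theory Num.Theory.
Local Open Scope ring_scope.

(* Vertices of the tree are 'I_d; the tree is given by a parent function
   [par] (par v = Some u means u = P(v), i.e. v -> u), with distinguished root. *)

Section TreeDefs.
Variable d : nat.
Variable par : 'I_d -> option 'I_d.

Definition is_rooted_tree (root : 'I_d) : Prop :=
  par root = None /\ (forall v, v != root -> par v != None) /\
  exists h : 'I_d -> nat, forall v u, par v = Some u -> (h u < h v)%N.

Definition children (k : 'I_d) : {set 'I_d} := [set w | par w == Some k].
(* L(k): proper descendants (ancestor chains in a d-vertex tree have < d steps) *)
Definition desc (k : 'I_d) : {set 'I_d} :=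
  [set w | [exists m : 'I_d, iter m.+1 (obind par) (Some w) == Some k]].
Definition nondesc (k : 'I_d) : {set 'I_d} := ~: (k |: desc k).
Definition is_leaf (k : 'I_d) : bool := children k == set0.

(* Edges of the tree, each identified with its child endpoint w (edge w -> P(w)). *)
Definition edge := {w : 'I_d | par w != None}.
End TreeDefs.

Definition asg_merge (d : nat) (n : 'I_d -> nat) (S : {set 'I_d})
  (x y : {dffun forall i : 'I_d, 'I_(n i)}) : {dffun forall i : 'I_d, 'I_(n i)} :=
  [ffun i => if i \in S then x i else y i].

Definition frank (R : fieldType) (I J : finType) (A : I -> J -> R) : nat :=
  \rank (\matrix_(i < #|I|, j < #|J|) A (enum_val i) (enum_val j)).

Section CoreEq.
Variable R : realFieldType.
Variable d : nat.
Variable par : 'I_d -> option 'I_d.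
Variable root : 'I_d.
Variable n : 'I_d -> nat.
Variable r : edge par -> nat.
Variable p : {dffun forall i : 'I_d, 'I_(n i)} -> R.
Variable Phi : forall e : edge par, {dffun forall i : 'I_d, 'I_(n i)} -> 'I_(r e) -> R.

Definition agree_off (k : 'I_d) (a a' : {dffun forall e : edge par, 'I_(r e)}) : bool :=
  [forall e : edge par, (par (sval e) != Some k) ==> (a' e == a e)].

Definition core_dep (k : 'I_d)
  (Gk : 'I_(n k) -> {dffun forall e : edge par, 'I_(r e)} -> R) : Prop :=
  forall xk (a a' : {dffun forall e : edge par, 'I_(r e)}),
    (forall e : edge par, (sval e == k) || (par (sval e) == Some k) -> a e = a' e) ->
    Gk xk a = Gk xk a'.

Definition contract (k : 'I_d)
  (Gk : 'I_(n k) -> {dffun forall e : edge par, 'I_(r e)} -> R)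
  (x : {dffun forall i : 'I_d, 'I_(n i)}) (a : {dffun forall e : edge par, 'I_(r e)}) : R :=
  \sum_(a' | agree_off k a a')
     (\prod_(e : edge par | par (sval e) == Some k) @Phi e x (a' e)) * Gk (x k) a'.

(* Phi_{k -> P(k)}(x_{L(k) u k}, alpha_(k,P(k))) for non-root k (0 at the root, unused) *)
Definition phi_up (k : 'I_d) (x : {dffun forall i : 'I_d, 'I_(n i)})
  (a : {dffun forall e : edge par, 'I_(r e)}) : R :=
  if (insub k : option (edge par)) is Some e then @Phi e x (a e) else 0.

Definition CDE (k : 'I_d)
  (Gk : 'I_(n k) -> {dffun forall e : edge par, 'I_(r e)} -> R) : Prop :=
  if k == root then forall (x : {dffun forall i : 'I_d, 'I_(n i)}) (a : {dffun forall e : edge par, 'I_(r e)}), contract Gk x a = p x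
  else if is_leaf par k then forall (x : {dffun forall i : 'I_d, 'I_(n i)}) (a : {dffun forall e : edge par, 'I_(r e)}), Gk (x k) a = phi_up k x a
  else forall (x : {dffun forall i : 'I_d, 'I_(n i)}) (a : {dffun forall e : edge par, 'I_(r e)}), contract Gk x a = phi_up k x a.
End CoreEq.

(* Each unfolding p(x_{L(w) u w}; x_{R(w)}) = Phi_w Psi_w is a rank factorisation, so Phi_w
   has a left inverse L_w and Psi_w a right inverse.  A function whose dependence on the
   variables of the subtree S(w) = L(w) u {w} lies in the column span of Phi_w is reproduced
   by the projector Phi_w L_w, and both p and Phi_{k -> P(k)} are of this kind for every child
   w of k.  Applying the left inverses of the children of k one at a time to the right-hand
   side of the k-th equation therefore produces a solution G_k, and since the children's
   subtrees are disjoint, the products of their Phi_w are linearly independent, which makes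
   G_k unique.  Finally, substituting the equations into each other while growing an
   upward-closed set of vertices from the root one vertex at a time turns p into the
   contraction of all the cores. *)

From HB Require Import structures.
From mathcomp Require Import all_boot all_order all_algebra ring.
Import Order.TTheory GRing.Theory Num.Theory.
Set Implicit Arguments. Unset Strict Implicit. Unset Printing Implicit Defensive.

Section RootedTree.
Variables (d : nat) (par : 'I_d -> option 'I_d) (root : 'I_d) (h : 'I_d -> nat).
Hypothesis par_nonroot : forall v, v != root -> par v != None.
Hypothesis height_par : forall v u, par v = Some u -> (h u < h v)%N.

Local Notation up m v := (iter m (obind par) (Some v)).

Definition anc v u := exists j, up j.+1 v = Some u.

Lemma iter_obind_None m : iter m (obind par) None = None.
Proof. by elim: m => //= m ->. Qed.

Lemma up_addn m1 m2 v : up (m1 + m2) v = iter m1 (obind par) (up m2 v).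
Proof. exact: iterD. Qed.

Lemma height_up j v u : up j.+1 v = Some u -> (h u < h v)%N.
Proof.
elim: j u => [|j IH] u; first exact: height_par.
rewrite iterS; case E: (up j.+1 v) => [w|] //= /height_par hw.
exact: ltn_trans hw (IH w E).
Qed.

Lemma anc_irrefl v : ~ anc v v.
Proof. by case=> j /height_up; rewrite ltnn. Qed.

Lemma anc_par v u : par v = Some u -> anc v u.
Proof. by exists 0. Qed.

Lemma anc_trans v w u : anc v w -> anc w u -> anc v u.
Proof. by case=> j1 H1 [j2 H2]; exists (j2 + j1.+1); rewrite -addSn up_addn H1. Qed.

Lemma anc_parE v u :
  anc v u -> par v = Some u \/ exists2 w, par v = Some w & anc w u.
Proof.
case=> j; rewrite iterSr /=; case: (par v) => [w|]; last by rewrite iter_obind_None.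
by case: j => [[->]|j H]; [left | right; exists w => //; exists j].
Qed.

Lemma anc_lastE v u : anc v u -> exists2 w, par w = Some u & w = v \/ anc v w.
Proof.
case=> j /=; case E: (up j v) => [w|] //= H; exists w => //.
by case: j E => [[]|j E]; [left | right; exists j].
Qed.

Lemma anc_total v w w' : anc v w -> anc v w' -> [\/ w = w', anc w w' | anc w' w].
Proof.
have step j j' x x' : up j.+1 v = Some x -> up j'.+1 v = Some x' -> (j < j')%N -> anc x x'.
  move=> Hx Hx' ltjj'; exists (j' - j).-1.
  have e : j'.+1 = (j' - j).-1.+1 + j.+1.
    by rewrite prednK ?subn_gt0 // addnS subnK // ltnW.
  by rewrite e up_addn Hx in Hx'.
case=> j Hj [j' Hj']; case: (ltngtP j j') => c.
- by apply: Or32; apply: step Hj Hj' c.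
- by apply: Or33; apply: step Hj' Hj c.
- by apply: Or31; move: Hj; rewrite c Hj' => -[].
Qed.

(* Along a chain of ancestors the height strictly decreases, so its vertices are distinct. *)
Lemma up_length j v u : up j v = Some u -> (j < d)%N.
Proof.
move=> Hj; pose c i := odflt v (up i v).
have upc i : (i <= j)%N -> up i v = Some (c i).
  move=> lij; rewrite /c; case E: (up i v) => [w|] //.
  by move: Hj; rewrite -(subnK lij) up_addn E iter_obind_None.
have lt_c i i' : (i < i' <= j)%N -> (h (c i') < h (c i))%N.
  case/andP=> lii' li'j; have := upc _ li'j.
  rewrite -(subnK (ltnW lii')) up_addn (upc i (ltnW (leq_trans lii' li'j))).
  by rewrite -(prednK (_ : 0 < i' - i)%N) ?subn_gt0 //; apply: height_up.
have c_inj : injective (fun i : 'I_j.+1 => c i).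
  move=> i i' /= E; apply/val_inj/eqP.
  case: (ltngtP i i') => // lt; [have := lt_c i i' | have := lt_c i' i];
    by rewrite lt -ltnS ltn_ord E ltnn => /(_ isT).
by have := leq_card _ c_inj; rewrite !card_ord.
Qed.

Lemma mem_desc w k : w \in desc par k <-> anc w k.
Proof.
rewrite inE; split; first by case/existsP=> m /eqP H; exists m.
by case=> j H; apply/existsP; exists (Ordinal (ltnW (up_length H))); apply/eqP.
Qed.

Lemma anc_root v : v != root -> anc v root.
Proof.
elim: {v}(h v).+1 {-2}v (ltnSn (h v)) => // m IH v hv nr.
case E: (par v) (par_nonroot nr) => [w|] // _.
case: (eqVneq w root) => [<-|wr]; first exact: anc_par.
by apply: anc_trans (anc_par E) (IH w _ wr); apply: leq_trans (height_par E) _.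
Qed.

Lemma exists_frontier_edge (K : {set 'I_d}) u : root \in K -> u \notin K ->
  exists v w, [/\ v \notin K, w \in K & par v = Some w].
Proof.
move=> rK; elim: {u}(h u).+1 {-2}u (ltnSn (h u)) => // m IH u hu uK.
have /par_nonroot : u != root by apply: contraNneq uK => ->.
case E: (par u) => [w|] // _; case: (boolP (w \in K)) => wK; first by exists u, w.
by apply: (IH w) => //; apply: leq_trans (height_par E) _.
Qed.

Definition subtree v : {set 'I_d} := v |: desc par v.

Lemma subtree_root i : i \in subtree root.
Proof.
rewrite in_setU1; case: eqVneq => //= ir.
by apply/mem_desc; apply: anc_root.
Qed.

Lemma mem_desc_child v k : v \in desc par k <-> exists2 w, par w = Some k & v \in subtree w.
Proof.
split.
  case/mem_desc/anc_lastE=> w pw [<-|avw]; exists w; rewrite // in_setU1 ?eqxx //.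
  by apply/orP; right; apply/mem_desc.
case=> w pw; rewrite in_setU1 => /orP[/eqP->|/mem_desc a]; apply/mem_desc.
  exact: anc_par.
exact: anc_trans a (anc_par pw).
Qed.

Lemma subtree_child_sub w k : par w = Some k -> subtree w \subset desc par k.
Proof. by move=> pw; apply/subsetP => v vw; apply/mem_desc_child; exists w. Qed.

Lemma par_neq w k : par w = Some k -> w != k.
Proof. by move=> pw; apply/eqP => E; subst; apply: (@anc_irrefl k); apply: anc_par. Qed.

Lemma par_notin_subtree w k : par w = Some k -> k \notin subtree w.
Proof.
move=> pw; rewrite in_setU1 eq_sym (negbTE (par_neq pw)) /=; apply/negP.
by move/mem_desc=> a; apply: (@anc_irrefl k); apply: anc_trans a (anc_par pw).
Qed.

Lemma sibling_not_anc w w' k : par w = Some k -> par w' = Some k -> ~ anc w w'.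
Proof.
move=> pw pw' /anc_parE[|[x px axw']].
  by rewrite pw => -[E]; rewrite E in pw'; apply: anc_irrefl (anc_par pw').
rewrite pw in px; case: px => <- in axw'.
by apply: (@anc_irrefl k); apply: anc_trans axw' (anc_par pw').
Qed.

Lemma subtree_siblings_disjoint w w' k : par w = Some k -> par w' = Some k -> w != w' ->
  [disjoint subtree w & subtree w'].
Proof.
move=> pw pw' ww'; rewrite -setI_eq0; apply/eqP/setP => v.
rewrite in_set0 in_setI !in_setU1.
apply/negP => /andP[/orP[/eqP E1|/mem_desc a1] /orP[/eqP E2|/mem_desc a2]].
- by move: ww'; rewrite -E1 -E2 eqxx.
- by subst v; apply: sibling_not_anc pw pw' a2.
- by subst v; apply: sibling_not_anc pw' pw a1.
- case: (anc_total a1 a2) => [E|a|a]; first by move: ww'; rewrite E eqxx.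
  + exact: sibling_not_anc pw pw' a.
  + exact: sibling_not_anc pw' pw a.
Qed.

End RootedTree.

Section DependentUpdate.
Variables (I : finType) (T : I -> Type).

Definition updf (f : {dffun forall i : I, T i}) (i : I) (v : T i) : {dffun forall i : I, T i} :=
  [ffun j => if i =P j is ReflectT E then eq_rect i T v j E else f j].

Lemma updf_same f i (v : T i) : updf f v i = v.
Proof. by rewrite ffunE; case: eqP => // E; rewrite (eq_axiomK E). Qed.

Lemma updf_other f i (v : T i) j : j != i -> updf f v j = f j.
Proof. by rewrite ffunE => ji; case: eqP => // E; rewrite E eqxx in ji. Qed.

Lemma updf_id f i : updf f (f i) = f.
Proof.
apply/ffunP => j; case: (eqVneq j i) => [->|ji]; first by rewrite updf_same.
by rewrite updf_other.
Qed.

End DependentUpdate.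

Local Open Scope ring_scope.

Section EqualOff.
Variables (R : comNzRingType) (E : finType) (r : E -> nat).
Local Notation A := {dffun forall e : E, 'I_(r e)}.

Definition eqoff (U : {set E}) (a a' : A) : bool :=
  [forall e, (e \notin U) ==> (a' e == a e)].

Lemma eqoffP (U : {set E}) (a a' : A) :
  reflect (forall e, e \notin U -> a' e = a e) (eqoff U a a').
Proof.
apply: (iffP forallP) => H e; first by move=> eU; have := H e; rewrite eU => /eqP.
by apply/implyP => /H ->.
Qed.

Lemma eqoff0 (a a' : A) : eqoff set0 a a' = (a' == a).
Proof.
by apply/eqoffP/eqP => [H|-> //]; apply/ffunP => e; apply: H; rewrite inE.
Qed.

Lemma eqoffT (a a' : A) : eqoff setT a a'.
Proof. by apply/eqoffP => e; rewrite inE. Qed.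

Lemma sum_eqoff0 (F : A -> R) (a : A) : \sum_(a' | eqoff set0 a a') F a' = F a.
Proof. by rewrite (big_pred1 a) // => a'; rewrite /= eqoff0. Qed.

Lemma sum_eqoffU (U1 U2 : {set E}) (F : A -> R) (a : A) : [disjoint U1 & U2] ->
  \sum_(a' | eqoff (U1 :|: U2) a a') F a' =
  \sum_(a1 | eqoff U1 a a1) \sum_(a2 | eqoff U2 a1 a2) F a2.
Proof.
move=> dis; pose glue (a' : A) : A := [ffun e => if e \in U1 then a' e else a e].
rewrite (partition_big glue (eqoff U1 a)); last first.
  by move=> a' _; apply/eqoffP => e eU; rewrite ffunE (negbTE eU).
apply: eq_bigr => a1 /eqoffP Ha1; apply: eq_bigl => a2; apply/andP/eqoffP.
  case=> /eqoffP H1 /eqP <- e eU2; rewrite ffunE; case: ifP => eU1 //.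
  by rewrite H1 // inE negb_or eU1.
move=> H2; split.
  by apply/eqoffP => e; rewrite inE negb_or => /andP[eU1 eU2]; rewrite H2 // Ha1.
apply/eqP/ffunP => e; rewrite ffunE; case: ifP => eU1.
  by rewrite H2 // (disjointFr dis eU1).
by rewrite Ha1 // eU1.
Qed.

Lemma sum_eqoff1 w (F : A -> R) (a : A) :
  \sum_(a' | eqoff [set w] a a') F a' = \sum_(b < r w) F (updf a b).
Proof.
rewrite (partition_big (fun a' : A => a' w) predT) //; apply: eq_bigr => b _.
rewrite (big_pred1 (updf a b)) // => a' /=; apply/andP/eqP.
  case=> /eqoffP H /eqP <-; apply/ffunP => e.
  case: (eqVneq e w) => [->|ew]; first by rewrite updf_same.
  by rewrite updf_other // H // inE.
move=> ->; rewrite updf_same; split => //.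
by apply/eqoffP => e; rewrite inE => ew; rewrite updf_other.
Qed.

End EqualOff.

Lemma sum_delta (R : comNzRingType) k (F : 'I_k -> R) b :
  \sum_(b' < k) (b == b')%:R * F b' = F b.
Proof.
rewrite (bigD1 b) //= eqxx mul1r big1 ?addr0 // => b' nb.
by rewrite eq_sym (negbTE nb) mul0r.
Qed.

Lemma big_setU_disjoint (R : Type) (idx : R) (op : Monoid.com_law idx) (I : finType)
  (U V : {set I}) (F : I -> R) : [disjoint U & V] ->
  \big[op/idx]_(i in U :|: V) F i = op (\big[op/idx]_(i in U) F i) (\big[op/idx]_(i in V) F i).
Proof. by move=> dis; rewrite -bigU //; apply: eq_bigl => i; rewrite !inE. Qed.

Section FactorInverse.
Variables (F : fieldType) (I J : finType) (k : nat).
Variables (P : I -> J -> F) (U : I -> 'I_k -> F) (V : 'I_k -> J -> F).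

Definition lmx := \matrix_(i < #|I|, a < k) U (enum_val i) a.
Definition rmx := \matrix_(a < k, j < #|J|) V a (enum_val j).

Definition linv (b : 'I_k) (x : I) : F := pinvmx lmx b (enum_rank x).
Definition rinv (y : J) (b : 'I_k) : F := pinvmx rmx (enum_rank y) b.

Hypothesis P_factor : forall x y, P x y = \sum_(a < k) U x a * V a y.
Hypothesis frank_P : frank P = k.

Lemma frank_factor : \matrix_(i, j) P (enum_val i) (enum_val j) = lmx *m rmx.
Proof. by apply/matrixP => i j; rewrite !mxE P_factor; apply: eq_bigr => a _; rewrite !mxE. Qed.

Lemma linvK b b' : \sum_(x : I) linv b x * U x b' = (b == b')%:R.
Proof.
have lmx_full : (1%:M <= lmx)%MS.
  by rewrite sub1mx /row_full eqn_leq rank_leq_col -{1}frank_P /frank frank_factor mxrankM_maxl.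
have := congr1 (fun M : 'M[F]_k => M b b') (mulmxKpV lmx_full).
rewrite !mxE mul1mx => <-; rewrite big_enum_val; apply: eq_bigr => i _.
by rewrite /linv enum_valK !mxE.
Qed.

Lemma rinvK b b' : \sum_(y : J) V b y * rinv y b' = (b == b')%:R.
Proof.
have rmx_free : row_free rmx.
  by rewrite /row_free eqn_leq rank_leq_row -{1}frank_P /frank frank_factor mxrankM_maxr.
have /row_free_inj inj := rmx_free.
have : rmx *m pinvmx rmx = 1%:M by apply: inj; rewrite mul1mx mulmxKpV.
move/(congr1 (fun M : 'M[F]_k => M b b')); rewrite !mxE => <-.
rewrite big_enum_val; apply: eq_bigr => j _.
by rewrite /rinv enum_valK !mxE.
Qed.

Lemma frank_pos_card : (0 < k)%N -> (0 < #|I|)%N.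
Proof.
move=> k_gt0; rewrite lt0n; apply/eqP => I0; move: k_gt0.
rewrite -frank_P /frank; move: (\matrix_(i, j) _); rewrite I0 => M.
by rewrite lt0n -leqn0 (leq_trans (rank_leq_row M)).
Qed.

End FactorInverse.

Unset Implicit Arguments.

Section CoreTensors.
Variables (R : realFieldType) (d : nat) (par : 'I_d -> option 'I_d).
Variables (n : 'I_d -> nat) (r : edge par -> nat).
Local Notation X := {dffun forall i : 'I_d, 'I_(n i)}.
Local Notation A := {dffun forall e : edge par, 'I_(r e)}.
Local Notation E := (edge par).
Local Notation S e := (subtree par (sval e)).
Local Notation merge := (@asg_merge d n).
Variables (p : X -> R) (Phi : forall e : E, X -> 'I_(r e) -> R).
Variable (Psi : forall e : E, 'I_(r e) -> X -> R).

Hypothesis Phi_local : forall (e : E) (x y : X),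
  (forall i, i \in S e -> x i = y i) -> forall a, Phi e x a = Phi e y a.
Hypothesis Psi_local : forall (e : E) (x y : X),
  (forall i, i \in nondesc par (sval e) -> x i = y i) -> forall a, Psi e a x = Psi e a y.
Hypothesis p_factor : forall (e : E) x, p x = \sum_(a < r e) Phi e x a * Psi e a x.
Hypothesis unfolding_rank : forall e : E, frank (fun x y : X => p (merge (S e) x y)) = r e.

Lemma mergeE U (x y : X) i : merge U x y i = if i \in U then x i else y i.
Proof. by rewrite ffunE. Qed.

Lemma Psi_offtree (e : E) (x y : X) :
  (forall i, i \notin S e -> x i = y i) -> forall a, Psi e a x = Psi e a y.
Proof. by move=> H; apply: Psi_local => i; rewrite inE => /H. Qed.

Lemma p_unfold (e : E) (x y : X) :
  p (merge (S e) x y) = \sum_(a < r e) Phi e x a * Psi e a y.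
Proof.
rewrite (p_factor e); apply: eq_bigr => b _; congr (_ * _).
  by apply: Phi_local => i iS; rewrite mergeE iS.
by apply: Psi_offtree => i iS; rewrite mergeE (negbTE iS).
Qed.

Local Notation L e := (linv (Phi e)).
Local Notation M e := (rinv (Psi e)).

Lemma L_Phi (e : E) b b' : \sum_y L e b y * Phi e y b' = (b == b')%:R.
Proof. exact: (linvK (P := fun x y => p (merge (S e) x y)) (p_unfold e) (unfolding_rank e)). Qed.

Lemma Psi_M (e : E) b b' : \sum_y Psi e b y * M e y b' = (b == b')%:R.
Proof. exact: (rinvK (P := fun x y => p (merge (S e) x y)) (p_unfold e) (unfolding_rank e)). Qed.

(* The left inverse of Phi_w reads off the coefficients of an expansion in the
   columns of Phi_w, provided they do not depend on the coordinates in S(w). *)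
Lemma L_coef (w : E) (c : 'I_(r w) -> X -> R) b x :
  (forall b' (x x' : X), (forall i, i \notin S w -> x i = x' i) -> c b' x = c b' x') ->
  \sum_y L w b y * \sum_(b' < r w) Phi w (merge (S w) y x) b' * c b' (merge (S w) y x) =
  c b x.
Proof.
move=> c_local; rewrite -(sum_delta (fun b0 => c b0 x) b).
under eq_bigr => y _ do rewrite mulr_sumr.
rewrite exchange_big /=; apply: eq_bigr => b' _; rewrite -L_Phi mulr_suml.
apply: eq_bigr => y _; rewrite mulrA; congr (_ * _ * _).
  by apply: Phi_local => i iS; rewrite mergeE iS.
by apply: c_local => i iS; rewrite mergeE (negbTE iS).
Qed.

(* [f] is fixed by the projection onto the span of the columns of Phi_w. *)
Definition proj_fixed (w : E) (f : A -> X -> R) := forall a x,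
  f a x = \sum_(b < r w) Phi w x b * \sum_y L w b y * f a (merge (S w) y x).

Lemma proj_fixed_span (w : E) (f : A -> X -> R) (c : A -> 'I_(r w) -> X -> R) :
  (forall a b (x x' : X), (forall i, i \notin S w -> x i = x' i) -> c a b x = c a b x') ->
  (forall a x, f a x = \sum_(b < r w) Phi w x b * c a b x) -> proj_fixed w f.
Proof.
move=> c_local f_span a x; rewrite {1}f_span; apply: eq_bigr => b _; congr (_ * _).
by under eq_bigr => y _ do rewrite f_span; rewrite L_coef //; apply: c_local.
Qed.

Lemma proj_fixed_p (w : E) : proj_fixed w (fun _ x => p x).
Proof.
apply: (@proj_fixed_span w _ (fun _ b x => Psi w b x)) => [a b x x' H|a x].
  exact: Psi_offtree.
exact: p_factor.
Qed.

Lemma Phi_expand (e : E) x b : Phi e x b = \sum_y p (merge (S e) x y) * M e y b.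
Proof.
transitivity (\sum_(c < r e) Phi e x c * \sum_y Psi e c y * M e y b).
  under eq_bigr => c _ do rewrite Psi_M.
  by rewrite -(sum_delta (fun c => Phi e x c) b); apply: eq_bigr => c _; rewrite mulrC eq_sym.
under eq_bigr => c _ do rewrite mulr_sumr.
rewrite exchange_big /=; apply: eq_bigr => y _; rewrite p_unfold mulr_suml.
by apply: eq_bigr => c _; rewrite mulrA.
Qed.

Lemma proj_fixed_Phi (e w : E) : S w \subset S e ->
  proj_fixed w (fun a x => Phi e x (a e)).
Proof.
move=> /subsetP sub_we.
pose c a b x := \sum_y Psi w b (merge (S e) x y) * M e y (a e).
apply: (@proj_fixed_span w _ c) => [a b x x' Hx|a x].
  apply: eq_bigr => y _; congr (_ * _); apply: Psi_offtree => i iS.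
  by rewrite !mergeE; case: ifP => // _; apply: Hx.
rewrite Phi_expand; under eq_bigr => y _ do rewrite (p_factor w) mulr_suml.
rewrite exchange_big /=; apply: eq_bigr => b _; rewrite mulr_sumr; apply: eq_bigr => y _.
rewrite mulrA; congr (_ * _ * _).
by apply: Phi_local => i iS; rewrite mergeE sub_we.
Qed.

Definition disjoint_subtrees (s : seq E) :=
  {in s &, forall w w', w != w' -> [disjoint S w & S w']}.

Lemma merge_comm (U V : {set 'I_d}) (y y' x : X) : [disjoint U & V] ->
  merge V y' (merge U y x) = merge U y (merge V y' x).
Proof.
move=> dUV; apply/ffunP => i; rewrite !mergeE.
by case: ifP => iV; case: ifP => iU //; rewrite (disjointFr dUV iU) in iV.
Qed.

Lemma sum_eqoff_cons w (s : seq E) (x : X) (F : A -> R) (a : A) : w \notin s ->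
  \sum_(a' | eqoff [set:: w :: s] a a') (\prod_(v <- w :: s) Phi v x (a' v)) * F a' =
  \sum_(b < r w) Phi w x b *
     \sum_(a' | eqoff [set:: s] (updf a b) a') (\prod_(v <- s) Phi v x (a' v)) * F a'.
Proof.
move=> ws; rewrite set_cons sum_eqoffU; last by rewrite disjoints1 inE.
rewrite sum_eqoff1; apply: eq_bigr => b _; rewrite mulr_sumr; apply: eq_bigr => a' Ha'.
rewrite big_cons mulrA; congr (_ * _ * _).
by move/eqoffP: Ha' => ->; rewrite ?updf_same ?inE.
Qed.

(* Apply the left inverse of Phi_w to the variables of S(w), which become the index of w. *)
Definition strip (w : E) (f : A -> X -> R) (a : A) (x : X) : R :=
  \sum_y L w (a w) y * f a (merge (S w) y x).

Definition core_of (f : A -> X -> R) (s : seq E) : A -> X -> R :=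
  foldl (fun g w => strip w g) f s.

Lemma strip_proj_fixed (w w' : E) f : [disjoint S w & S w'] ->
  proj_fixed w' f -> proj_fixed w' (strip w f).
Proof.
move=> dis fixed a x.
transitivity (\sum_(b < r w') \sum_y' \sum_y Phi w' x b * (L w' b y' *
   (L w (a w) y * f a (merge (S w) y (merge (S w') y' x))))).
  rewrite /strip; under eq_bigr => y _ do rewrite (fixed a) mulr_sumr.
  rewrite exchange_big /=; apply: eq_bigr => b _.
  rewrite [RHS]exchange_big /=; apply: eq_bigr => y _.
  rewrite !mulr_sumr; apply: eq_bigr => y' _.
  rewrite (merge_comm (S w) (S w') y y' x dis) (Phi_local w' _ x); first by ring.
  by move=> i iS; rewrite mergeE (disjointFl dis iS).
apply: eq_bigr => b _; rewrite mulr_sumr; apply: eq_bigr => y' _.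
by rewrite /strip !mulr_sumr.
Qed.

Lemma core_of_local_x (s : seq E) (D : {set 'I_d}) f :
  (forall a (x x' : X), (forall i, i \in D -> x i = x' i) -> f a x = f a x') ->
  forall a (x x' : X), (forall i, i \in D -> {in s, forall w, i \notin S w} -> x i = x' i) ->
  core_of f s a x = core_of f s a x'.
Proof.
elim: s D f => [|w s IH] D f f_local a x x' Hx /=.
  by apply: f_local => i iD; apply: Hx.
apply: (IH (D :\: S w)) => [a' z z' Hz|i].
  apply: eq_bigr => y _; congr (_ * _); apply: f_local => i iD.
  by rewrite !mergeE; case: ifP => // iS; apply: Hz; rewrite inE iS.
rewrite inE => /andP[iS iD] Hs; apply: Hx => // v.
by rewrite inE => /orP[/eqP->|/Hs].
Qed.

Lemma core_of_local_a (s : seq E) (E0 : {set E}) f :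
  (forall (a a' : A) x, (forall e, e \in E0 -> a e = a' e) -> f a x = f a' x) ->
  forall (a a' : A) x, (forall e, (e \in E0) || (e \in s) -> a e = a' e) ->
  core_of f s a x = core_of f s a' x.
Proof.
elim: s E0 f => [|w s IH] E0 f f_local a a' x Ha /=.
  by apply: f_local => e eE0; apply: Ha; rewrite eE0.
apply: (IH (w |: E0)) => [b b' z Hb|e]; last first.
  by move=> He; apply: Ha; move: He; rewrite in_setU1 inE => /orP[/orP[]|] ->; rewrite ?orbT.
rewrite /strip (Hb w (setU11 _ _)); apply: eq_bigr => y _; congr (_ * _).
by apply: f_local => e eE0; apply: Hb; rewrite in_setU1 eE0 orbT.
Qed.

Lemma core_of_expand (s : seq E) f : uniq s -> disjoint_subtrees s ->
  {in s, forall w, proj_fixed w f} ->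
  (forall (a a' : A) x, (forall e, e \notin s -> a e = a' e) -> f a x = f a' x) ->
  forall a x, f a x = \sum_(a' | eqoff [set:: s] a a')
                         (\prod_(w <- s) Phi w x (a' w)) * core_of f s a' x.
Proof.
elim: s f => [|w s IH] f /=.
  by move=> _ _ _ _ a x; rewrite set_nil sum_eqoff0 big_nil mul1r.
case/andP=> ws s_uniq dis fixed f_local a x.
have w_ws : w \in w :: s by rewrite inE eqxx.
rewrite sum_eqoff_cons // (fixed w w_ws a x); apply: eq_bigr => b _; congr (_ * _).
rewrite -IH //.
- rewrite /strip updf_same; apply: eq_bigr => y _; congr (_ * _).
  by apply: f_local => e; rewrite inE negb_or => /andP[ew _]; rewrite updf_other.
- by move=> v v' vs v's; apply: dis; rewrite inE ?vs ?v's orbT.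
- move=> v vs; apply: strip_proj_fixed; last by apply: fixed; rewrite inE vs orbT.
  by apply: dis; rewrite ?inE ?eqxx ?vs ?orbT //; apply: contraNneq ws => ->.
- move=> a1 a2 z Ha; rewrite /strip (Ha w ws); apply: eq_bigr => y _; congr (_ * _).
  apply: f_local => e; rewrite inE negb_or => /andP[_]; exact: Ha.
Qed.

Lemma Phi_free (x0 : X) (s : seq E) (c : A -> R) : uniq s -> disjoint_subtrees s ->
  (forall a x, \sum_(a' | eqoff [set:: s] a a') (\prod_(w <- s) Phi w x (a' w)) * c a' = 0) ->
  forall a, c a = 0.
Proof.
elim: s => [|w s IH] /=.
  by move=> _ _ Hc a; have := Hc a x0; rewrite set_nil sum_eqoff0 big_nil mul1r.
case/andP=> ws s_uniq dis Hc.
pose T (a1 : A) (x : X) :=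
  \sum_(a' | eqoff [set:: s] a1 a') (\prod_(v <- s) Phi v x (a' v)) * c a'.
apply: IH => // [v v' vs v's|a1 x]; first by apply: dis; rewrite inE ?vs ?v's orbT.
have T_local (b : 'I_(r w)) (z z' : X) : (forall i, i \notin S w -> z i = z' i) ->
    T (updf a1 b) z = T (updf a1 b) z'.
  move=> Hz; apply: eq_bigr => a' _; congr (_ * _); apply: eq_big_seq => v vs.
  have dwv : [disjoint S w & S v].
    by apply: dis; rewrite ?inE ?eqxx ?vs ?orbT //; apply: contraNneq ws => ->.
  by apply: Phi_local => i iS; apply: Hz; rewrite (disjointFl dwv iS).
change (T a1 x = 0); rewrite -(updf_id a1 w).
rewrite -(L_coef w (fun b z => T (updf a1 b) z)) => [|b z z']; last exact: T_local.
by rewrite big1 // => y _; rewrite -sum_eqoff_cons // Hc mulr0.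
Qed.

Variables (root : 'I_d) (h : 'I_d -> nat).
Hypothesis par_root : par root = None.
Hypothesis par_nonroot : forall v, v != root -> par v != None.
Hypothesis height_par : forall v u, par v = Some u -> (h u < h v)%N.

Definition child_edges k : {set E} := [set e : E | par (sval e) == Some k].

Lemma child_edgesP k (e : E) : reflect (par (sval e) = Some k) (e \in child_edges k).
Proof. by rewrite inE; apply: eqP. Qed.

Lemma child_edges_disjoint k : disjoint_subtrees (enum (child_edges k)).
Proof.
move=> w w'; rewrite !mem_enum => /child_edgesP pw /child_edgesP pw' ww'.
by apply: (subtree_siblings_disjoint height_par pw pw'); rewrite (inj_eq val_inj).
Qed.

Lemma subtree_minus_children k i : i \in subtree par k ->
  {in enum (child_edges k), forall w, i \notin S w} -> i = k.
Proof.
rewrite in_setU1 => /orP[/eqP //|/(mem_desc_child height_par) [w pw iw] Hi].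
have Hw : par w != None by rewrite pw.
by have := Hi (Sub w Hw); rewrite mem_enum inE /= pw eqxx iw => /(_ isT).
Qed.

Lemma contractE k (Gk : 'I_(n k) -> A -> R) x a :
  contract Phi Gk x a = \sum_(a' | eqoff (child_edges k) a a')
                           (\prod_(w in child_edges k) Phi w x (a' w)) * Gk (x k) a'.
Proof.
apply: eq_big => [a'|a' _]; first by apply: eq_forallb => e; rewrite inE.
by congr (_ * _); apply: eq_bigl => e; rewrite inE.
Qed.

Lemma contract_leaf k (Gk : 'I_(n k) -> A -> R) x a :
  is_leaf par k -> contract Phi Gk x a = Gk (x k) a.
Proof.
move=> /eqP leaf; rewrite contractE; have -> : child_edges k = set0.
  apply/setP => e; rewrite in_set0; apply/child_edgesP => pe.
  by move/setP: leaf => /(_ (sval e)); rewrite !inE pe eqxx.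
by rewrite sum_eqoff0 big_set0 mul1r.
Qed.

(* Right-hand side of the k-th Core Determining Equation; at a leaf the contraction is
   G_k itself, so the single form [contract G_k = cde_rhs k] covers all three cases. *)
Definition cde_rhs k (a : A) (x : X) : R := if k == root then p x else phi_up Phi k x a.

Lemma CDE_contractE k (Gk : 'I_(n k) -> A -> R) :
  CDE root p Phi Gk <-> forall x a, contract Phi Gk x a = cde_rhs k a x.
Proof.
rewrite /CDE /cde_rhs; case: (k == root) => //; case: ifP => // leaf.
by split=> C x a; move: (C x a); rewrite contract_leaf.
Qed.

Lemma cde_rhs_local_a k (a a' : A) x :
  (forall e : E, sval e = k -> a e = a' e) -> cde_rhs k a x = cde_rhs k a' x.
Proof. by move=> Ha; rewrite /cde_rhs /phi_up; case: insubP => // e _ ek; rewrite Ha. Qed.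

Lemma cde_rhs_local_x k a (x x' : X) :
  (forall i, i \in subtree par k -> x i = x' i) -> cde_rhs k a x = cde_rhs k a x'.
Proof.
move=> Hx; rewrite /cde_rhs /phi_up; case: eqVneq => [kr|_].
  by congr p; apply/ffunP => i; apply: Hx; rewrite kr (subtree_root par_nonroot height_par).
by case: insubP => // e _ ek; apply: Phi_local => i; rewrite ek; apply: Hx.
Qed.

Lemma cde_rhs_proj_fixed k (w : E) : w \in child_edges k -> proj_fixed w (cde_rhs k).
Proof.
move=> /child_edgesP pw; rewrite /cde_rhs /phi_up; case: eqVneq => [_|kr].
  exact: proj_fixed_p.
case: insubP => [e _ ek|]; last by rewrite par_nonroot.
apply: proj_fixed_Phi; rewrite ek; apply/subsetP => i iw.
by rewrite in_setU1 (subsetP (subtree_child_sub height_par pw)) ?orbT.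
Qed.

Lemma Phi_child_updf k (w : E) x (xk : 'I_(n k)) a : w \in child_edges k ->
  Phi w (updf x xk) a = Phi w x a.
Proof.
move=> /child_edgesP pw; apply: Phi_local => i iw; rewrite updf_other //.
by apply: contraTneq iw => ->; exact: (par_notin_subtree height_par pw).
Qed.

Hypothesis r_pos : forall e : E, (0 < r e)%N.

Lemma card_dffun_pos k : 'I_(n k) -> (0 < #|X|)%N.
Proof.
move=> xk; case: (pickP (@predT E)) => [e _|noE].
  exact: frank_pos_card (unfolding_rank e) (r_pos e).
have all_root i : i = root.
  by apply/eqP; apply/negPn/negP => /par_nonroot ir; have := noE (Sub i ir).
have n_pos i : (0 < n i)%N by rewrite (all_root i) -(all_root k) (leq_ltn_trans _ (ltn_ord xk)).
by apply/card_gt0P; exists [ffun i => Ordinal (n_pos i)].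
Qed.

Section TensorNetwork.
Variable G : forall k, 'I_(n k) -> A -> R.
Hypothesis G_dep : forall k, core_dep (G k).
Hypothesis G_CDE : forall k, CDE root p Phi (G k).

Lemma cde_rhs_cores k x (a : A) : cde_rhs k a x = \sum_(a' | eqoff (child_edges k) a a')
  (\prod_(w in child_edges k) Phi w x (a' w)) * G k (x k) a'.
Proof. by rewrite -contractE; have /CDE_contractE -> := G_CDE k. Qed.

Lemma Phi_cores (e : E) x (a : A) : Phi e x (a e) =
  \sum_(a' | eqoff (child_edges (sval e)) a a')
     (\prod_(w in child_edges (sval e)) Phi w x (a' w)) * G (sval e) (x (sval e)) a'.
Proof.
rewrite -cde_rhs_cores /cde_rhs /phi_up valK ifN //.
by apply: contraNneq (valP e) => /= er; rewrite [val e]er par_root.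
Qed.

Definition below_edges (K : {set 'I_d}) : {set E} :=
  [set e : E | if par (sval e) is Some u then u \in K else false].
Definition frontier_edges (K : {set 'I_d}) : {set E} :=
  [set e in below_edges K | sval e \notin K].

Definition upclosed (K : {set 'I_d}) :=
  root \in K /\ forall v u, v \in K -> par v = Some u -> u \in K.

(* The network of the cores over K, with the subtrees hanging from K still
   represented by their Phi. *)
Definition partial_ttns (K : {set 'I_d}) := forall x a,
  p x = \sum_(a' | eqoff (below_edges K) a a')
          (\prod_(k in K) G k (x k) a') * \prod_(e in frontier_edges K) Phi e x (a' e).

Lemma partial_ttns_root : partial_ttns [set root].
Proof.
have below : below_edges [set root] = child_edges root.
  by apply/setP => e; rewrite !inE; case: (par (sval e)) => [u|] //=; rewrite inE.
have front : frontier_edges [set root] = child_edges root.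
  apply/setP => e; rewrite !inE; case E: (par (sval e)) => [u|] //=; rewrite !inE andbC.
  by case: eqP => // er; rewrite er par_root in E.
move=> x a; have := cde_rhs_cores root x a; rewrite /cde_rhs eqxx => ->.
by rewrite below front; apply: eq_bigr => a' _; rewrite big_set1 mulrC.
Qed.

Lemma below_edges_add K v : below_edges (v |: K) = below_edges K :|: child_edges v.
Proof.
apply/setP => e; rewrite !inE; case: (par (sval e)) => [u|] //=.
by rewrite in_setU1 orbC (inj_eq (@Some_inj _)).
Qed.

Lemma frontier_edges_add K (ev : E) : upclosed K -> sval ev \notin K ->
  frontier_edges (sval ev |: K) = (frontier_edges K :\ ev) :|: child_edges (sval ev).
Proof.
move=> [_ Kup] vK; apply/setP => e; rewrite !inE.
have -> : (e != ev) = (sval e != sval ev) by rewrite (inj_eq val_inj).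
case pe: (par (sval e)) => [u|]; last by rewrite andbF.
rewrite in_setU1 (inj_eq (@Some_inj _)).
case: (eqVneq u (sval ev)) => [uv|uv] /=.
  have eK : sval e \notin K by apply: contra vK => eK; rewrite -uv (Kup _ _ eK pe).
  by rewrite (negbTE eK) (negbTE (par_neq height_par (etrans pe (congr1 _ uv)))) orbT.
by rewrite orbF; case: (u \in K); case: (sval e == sval ev); case: (sval e \in K).
Qed.

Lemma partial_ttns_add K (ev : E) : upclosed K -> sval ev \notin K ->
  ev \in below_edges K -> partial_ttns K -> partial_ttns (sval ev |: K).
Proof.
move=> Kup vK evB IK x a.
have evF : ev \in frontier_edges K by rewrite inE evB vK.
have child_notK (e : E) : e \in child_edges (sval ev) -> sval e \notin K.
  by move=> /child_edgesP pe; apply: contra vK => eK; apply: Kup.2 _ _ eK pe.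
have dis_below : [disjoint below_edges K & child_edges (sval ev)].
  apply/pred0P => e /=; rewrite !inE; case: (par (sval e)) => [u|] //=.
  by apply/negP => /andP[uK /eqP[uv]]; rewrite -uv uK in vK.
have dis_front : [disjoint frontier_edges K :\ ev & child_edges (sval ev)].
  by apply: disjointWl dis_below; apply/subsetP => e; rewrite !inE => /and3P[].
rewrite (IK x a) below_edges_add sum_eqoffU //; apply: eq_bigr => a' _.
rewrite (big_setD1 ev evF) /= (Phi_cores ev x a') mulr_suml mulr_sumr.
apply: eq_bigr => c /eqoffP a'_c.
rewrite big_setU1 //= frontier_edges_add // big_setU_disjoint //=.
have -> : \prod_(k in K) G k (x k) a' = \prod_(k in K) G k (x k) c.
  apply: eq_bigr => k kK; apply: G_dep => e He; rewrite a'_c //; apply/negP => eC.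
  case/orP: He => /eqP ek.
    by move: (child_notK e eC); rewrite ek kK.
  by move/child_edgesP: eC; rewrite ek => -[kv]; rewrite -kv kK in vK.
have -> : \prod_(e in frontier_edges K :\ ev) Phi e x (a' e) =
          \prod_(e in frontier_edges K :\ ev) Phi e x (c e).
  by apply: eq_bigr => e eF; rewrite a'_c // (disjointFr dis_front eF).
ring.
Qed.

Lemma partial_ttns_setT K : upclosed K -> partial_ttns K -> partial_ttns setT.
Proof.
elim: {K}#|~: K| {-2}K (leqnn #|~: K|) => [|m IH] K cardK Kup IK;
  (case: (boolP [exists u, u \notin K]) => [/existsP[u uK]|/existsPn allK];
   last by have <- : K = setT by apply/setP => i; rewrite inE; apply/negPn/allK).
  by move: cardK; rewrite leqn0 cards_eq0 => /eqP/setP/(_ u); rewrite !inE uK.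
have [v [w [vK wK pv]]] := exists_frontier_edge par_nonroot height_par Kup.1 uK.
have Hv : par v != None by rewrite pv.
apply: (IH (v |: K)).
- rewrite -ltnS (leq_trans _ cardK) // (cardsD1 v (~: K)) inE vK.
  by rewrite setCU setIC -setDE add1n.
- split=> [|v' u']; first by rewrite in_setU1 Kup.1 orbT.
  case/setU1P=> [-> |v'K] pv'; rewrite in_setU1.
    by move: pv'; rewrite pv => -[<-]; rewrite wK orbT.
  by rewrite (Kup.2 _ _ v'K pv') orbT.
- by apply: (partial_ttns_add K (Sub v Hv)) => //=; rewrite inE /= pv.
Qed.

Lemma ttns x : p x = \sum_(a : A) \prod_(k < d) G k (x k) a.
Proof.
pose a0 : A := [ffun e => Ordinal (r_pos e)].
have below : below_edges [set: 'I_d] = [set: E].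
  apply/setP => e; rewrite !inE; case E: (par (sval e)) => [u|]; first by rewrite inE.
  by move: (valP e); rewrite E.
have front : frontier_edges [set: 'I_d] = set0 by apply/setP => e; rewrite !inE andbF.
have root_up : upclosed [set root].
  by split=> [|v u /set1P ->]; rewrite ?set11 ?par_root.
rewrite (partial_ttns_setT _ root_up partial_ttns_root x a0) below front.
apply: eq_big => [a|a _]; first exact: eqoffT.
by rewrite big_set0 mulr1; apply: eq_bigl => k; rewrite inE.
Qed.

End TensorNetwork.

Section Cores.
Variable x0 : X.

(* The left inverses of the Phi of all children of k applied to the right-hand side of
   the k-th equation; the result depends on the variables only through x_k, so any
   assignment extending xk may be used. *)
Definition core k (xk : 'I_(n k)) (a : A) : R :=
  core_of (cde_rhs k) (enum (child_edges k)) a (updf x0 xk).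

Lemma core_dep_core k : core_dep (core k).
Proof.
move=> xk a a' Ha; apply: (core_of_local_a _ [set e : E | sval e == k]).
  by move=> b b' x Hb; apply: cde_rhs_local_a => e ek; apply: Hb; rewrite inE ek.
by move=> e; rewrite inE mem_enum inE => /orP[] He; apply: Ha; rewrite He ?orbT.
Qed.

Lemma CDE_core k : CDE root p Phi (core k).
Proof.
apply/CDE_contractE => x a; rewrite contractE.
rewrite (core_of_expand (enum (child_edges k)) (cde_rhs k) _ _ _ _ a x).
- rewrite set_enum; apply: eq_bigr => a' _; rewrite big_enum; congr (_ * _).
  apply: (core_of_local_x _ (subtree par k)) => [b z z' Hz|i ik Hi].
    exact: cde_rhs_local_x.
  by rewrite (subtree_minus_children k i ik Hi) updf_same.
- exact: enum_uniq.
- exact: child_edges_disjoint.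
- by move=> w; rewrite mem_enum; apply: cde_rhs_proj_fixed.
- move=> b b' z Hb; apply: cde_rhs_local_a => e ek; apply: Hb; rewrite mem_enum.
  by apply/child_edgesP; rewrite ek => /(par_neq height_par); rewrite eqxx.
Qed.

Lemma core_unique k (G1 G2 : 'I_(n k) -> A -> R) :
  CDE root p Phi G1 -> CDE root p Phi G2 -> forall xk a, G1 xk a = G2 xk a.
Proof.
move=> /CDE_contractE C1 /CDE_contractE C2 xk a; apply/eqP; rewrite -subr_eq0; apply/eqP.
apply: (Phi_free x0 (enum (child_edges k)) (fun a' => G1 xk a' - G2 xk a')) => [||a1 x].
- exact: enum_uniq.
- exact: child_edges_disjoint.
have := C1 (updf x xk) a1; rewrite -(C2 (updf x xk) a1) !contractE updf_same.
move/eqP; rewrite -subr_eq0 -sumrB set_enum => /eqP E0; rewrite -[RHS]E0.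
apply: eq_bigr => a' _; rewrite -mulrBr big_enum; congr (_ * _).
by apply: eq_bigr => w wk; rewrite Phi_child_updf.
Qed.

Lemma core_spec k : [/\ core_dep (core k), CDE root p Phi (core k) &
  forall G' : 'I_(n k) -> A -> R, core_dep G' -> CDE root p Phi G' ->
    forall xk a, G' xk a = core k xk a].
Proof.
split=> [||G' _ C']; [exact: core_dep_core | exact: CDE_core |].
exact: core_unique C' (CDE_core k).
Qed.

End Cores.

Lemma ttns_cores_exist : exists G : forall k, 'I_(n k) -> A -> R,
  (forall k, [/\ core_dep (G k), CDE root p Phi (G k) &
     forall G' : 'I_(n k) -> A -> R, core_dep G' -> CDE root p Phi G' ->
       forall xk a, G' xk a = G k xk a]) /\
  (forall x, p x = \sum_(a : A) \prod_(k < d) G k (x k) a).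
Proof.
have [x0 _|noX] := pickP (@predT X).
  have cores := core_spec x0; exists (core x0); split=> // x.
  by apply: ttns => k; have [] := cores k.
(* Without any assignment all equations hold vacuously, and no index xk exists. *)
exists (fun _ _ _ => 0); split=> [k|x]; last by have := noX x.
split=> [//||G' _ _ xk]; first by apply/CDE_contractE => x; have := noX x.
by have /card_gt0P[x _] := card_dffun_pos k xk; have := noX x.
Qed.

End CoreTensors.

Theorem theorem1 (R : realFieldType) (d : nat) (par : 'I_d -> option 'I_d)
  (root : 'I_d) (n : 'I_d -> nat) (r : edge par -> nat)
  (p : {dffun forall i : 'I_d, 'I_(n i)} -> R)
  (Phi : forall e : edge par, {dffun forall i : 'I_d, 'I_(n i)} -> 'I_(r e) -> R)
  (Psi : forall e : edge par, 'I_(r e) -> {dffun forall i : 'I_d, 'I_(n i)} -> R) :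
  is_rooted_tree par root ->
  (forall e : edge par, (0 < r e)%N) ->
  (forall (e : edge par) (x y : {dffun forall i : 'I_d, 'I_(n i)}),
     (forall i, i \in sval e |: desc par (sval e) -> x i = y i) ->
     forall a, Phi e x a = Phi e y a) ->
  (forall (e : edge par) (x y : {dffun forall i : 'I_d, 'I_(n i)}),
     (forall i, i \in nondesc par (sval e) -> x i = y i) ->
     forall a, Psi e a x = Psi e a y) ->
  (forall (e : edge par) x, p x = \sum_(a < r e) Phi e x a * Psi e a x) ->
  (forall e : edge par,
     frank (fun x y : {dffun forall i : 'I_d, 'I_(n i)} =>
              p (asg_merge (sval e |: desc par (sval e)) x y)) = r e) ->
  exists G : forall k : 'I_d, 'I_(n k) -> {dffun forall e : edge par, 'I_(r e)} -> R,
    (forall k : 'I_d,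
       [/\ core_dep (G k), CDE root p Phi (G k) &
           forall G' : 'I_(n k) -> {dffun forall e : edge par, 'I_(r e)} -> R,
             core_dep G' -> CDE root p Phi G' ->
             forall xk a, G' xk a = G k xk a]) /\
    (forall x, p x = \sum_(a : {dffun forall e : edge par, 'I_(r e)})
                       \prod_(k < d) G k (x k) a).
Proof.
move=> [par_root [par_nonroot [h height_par]]] r_pos Phi_local Psi_local p_factor rank.
apply: ttns_cores_exist; eassumption.
Qed.
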